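(* Let $(\pi_r)_{r\in\mathbb{N}}$ be a sequence of natural numbers (periods) and let $(k_t)_{t\in\mathbb{N}}$ be the multiperiodic sequence with periods $(\pi_r)_{r\in\mathbb{N}}$ and seeds $\sigma_r=1$ for all $r\in\mathbb{N}$. Then for every $r\in\mathbb{N}$ the limit $$f_r:=\lim_{T\to\infty}\frac{1}{T}\sum_{t=1}^T \mathbf{1}\{k_t\ge r\}$$ exists and $$f_r=\left(\frac{\pi_1-1}{\pi_1}\right)\left(\frac{\pi_2-1}{\pi_2}\right)\cdots\left(\frac{\pi_{r-1}-1}{\pi_{r-1}}\right),$$ with the empty product (for $r=1$) equal to $1$.
   Context: $\mathbb{N}=\{1,2,3,\dots\}$. Multiperiodic sequence: given periods $\pi_r\in\mathbb{N}$ and seeds $\sigma_r\in\{1,2,\dots,\pi_r\}$ for $r\in\mathbb{N}$, the sequence $(k_t)_{t\in\mathbb{N}}$ with values in $\mathbb{N}\cup\{\infty\}$ is defined by the requirement that for each $r\in\mathbb{N}$, if $(k^{(r)}_t)_{t\in\mathbb{N}}$ denotes the subsequence of $(k_t)$ obtained by deleting all tokens $k_t<r$, then $k^{(r)}_t=r \iff t\equiv\sigma_r \pmod{\pi_r}$; any $k_t$ left undefined by these constraints for all $r$ is set to $k_t=\infty$. Equivalently, it is generated by clocks $\phi_r$ initialized to $\phi_r=\sigma_r$: to produce each token, scan $r=1,2,\dots$, decrementing each clock $\phi_r>1$, until the first $r$ with $\phi_r=1$; output $k_t=r$ and reset $\phi_r=\pi_r$ (if no such $r$ exists, $k_t=\infty$).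 With all seeds equal to $1$ the sequence is finite (all $k_t<\infty$). $\mathbf{1}\{\cdot\}$ is the indicator. *)

From Stdlib Require Import ClassicalEpsilon.
From mathcomp Require Import all_boot all_order all_algebra.
From mathcomp Require Import all_classical all_reals all_analysis.

Set Implicit Arguments. Unset Strict Implicit. Unset Printing Implicit Defensive.

(* Indices r, t range over N = {1,2,...}; index 0 of nat-indexed families is
   unused.  A token value [None : option nat] stands for infinity. *)

Definition first_one (phi : nat -> nat) : option nat :=
  match excluded_middle_informative (exists n, (0 < n) && (phi n == 1)) with
  | left H => Some (ex_minn H)
  | right _ => None
  end.

(* One token-production step of the clock mechanism: scan r = 1,2,...,
   decrementing each clock > 1, until the first r with clock = 1, which is
   reset to pi r. *)
Definition clock_step (pi phi : nat -> nat) : nat -> nat := fun r =>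
  match first_one phi with
  | Some k => if r < k then (if 1 < phi r then (phi r).-1 else phi r)
              else if r == k then pi r else phi r
  | None => if 1 < phi r then (phi r).-1 else phi r
  end.

Fixpoint clocks (pi sigma : nat -> nat) (t : nat) : nat -> nat :=
  match t with
  | 0 => sigma
  | t'.+1 => clock_step pi (clocks pi sigma t')
  end.

Definition multiperiodic (pi sigma : nat -> nat) (t : nat) : option nat :=
  first_one (clocks pi sigma t.-1).

Definition ind_ge (k : option nat) (r : nat) : nat :=
  match k with
  | Some x => (r <= x)%N
  | None => 1%N
  end.

From mathcomp Require Import all_boot all_order all_algebra.
From mathcomp Require Import all_classical all_reals all_analysis.
From mathcomp Require Import zify ring lra.
From Stdlib Require Import ClassicalEpsilon.
Set Implicit Arguments.
Unset Strict Implicit.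
Unset Printing Implicit Defensive.

Import Order.TTheory GRing.Theory Num.Theory.
Import numFieldNormedType.Exports.
Local Open Scope classical_set_scope.
Local Open Scope ring_scope.

(* With all seeds 1, clock r is only touched by tokens >= r: a token r resets
   it from 1 to pi_r, a token > r decrements it.  Hence after s tokens
   #{k_t >= r} + phi_r = pi_r * #{k_t = r} + 1 with 1 <= phi_r <= pi_r, i.e.
   pi_r #{k_t >= r+1} = (pi_r - 1) #{k_t >= r} - (phi_r - 1).  Dividing by T,
   the frequency of tokens >= r+1 is (pi_r - 1)/pi_r times that of tokens >= r
   up to an error below 1/T, and induction on r gives the product. *)

Lemma first_oneP (phi : nat -> nat) n : (0 < n)%N -> phi n = 1%N ->
  exists k, [/\ first_one phi = Some k, (0 < k)%N, phi k = 1%N &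
    forall m, (0 < m)%N -> (m < k)%N -> phi m <> 1%N].
Proof.
move=> n_gt0 phin; rewrite /first_one.
case: excluded_middle_informative => [ex1|no1]; last first.
  by case: no1; exists n; rewrite n_gt0 phin.
case: ex_minnP => k /andP[k_gt0 /eqP phik] kmin; exists k; split=> // m m_gt0 mk phim.
by have := kmin m; rewrite m_gt0 phim eqxx leqNgt mk => /(_ isT).
Qed.

Lemma cvg_invn (R : realType) : (fun T : nat => (T%:R : R)^-1) @ \oo --> 0.
Proof. by rewrite -(cvg_shiftS (fun T : nat => (T%:R : R)^-1)); exact: cvg_harmonic. Qed.

Section AllSeedsOne.

Variable pi : nat -> nat.

Definition clk (s : nat) : nat -> nat := clocks pi (fun _ => 1%N) s.

Lemma clk_untouched s r : (s < r)%N -> clk s r = 1%N.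
Proof.
elim: s r => [//|s IH] r sr; rewrite /clk /= /clock_step -/(clk s).
have [k [-> k_gt0 _ kmin]] := first_oneP (ltn0Sn s) (IH _ (ltnSn s)).
have k_le : (k <= s.+1)%N.
  by rewrite leqNgt; apply/negP => /(kmin _ (ltn0Sn s)); apply; exact: IH.
have -> : (r < k)%N = false by lia.
have -> : (r == k) = false by lia.
by apply: IH; lia.
Qed.

(* [token s] is k_(s+1); the default 0 is never used, see [tokenP]. *)
Definition token (s : nat) : nat := odflt 0%N (first_one (clk s)).

Lemma tokenP s : [/\ first_one (clk s) = Some (token s), (0 < token s)%N,
  clk s (token s) = 1%N &
  forall m, (0 < m)%N -> (m < token s)%N -> clk s m <> 1%N].
Proof.
have [k [Ek ? ? ?]] := first_oneP (ltn0Sn s) (clk_untouched (ltnSn s)).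
by rewrite /token Ek.
Qed.

Lemma clkS s r : (0 < r)%N -> clk s.+1 r =
  if (r < token s)%N then (clk s r).-1
  else if r == token s then pi r else clk s r.
Proof.
move=> r_gt0; have [Etok _ _ tokmin] := tokenP s.
rewrite /clk /= /clock_step -/(clk s) Etok.
case: (ltnP r (token s)) => // r_lt; case: (ltnP 1 (clk s r)) => // clk_le1.
(* below the token no clock is 1, so an undecremented clock is 0 = 0.-1 *)
by have := tokmin r r_gt0 r_lt; case: (clk s r) clk_le1 => [|[]].
Qed.

Definition count_ge (r s : nat) : nat := (\sum_(i < s) (r <= token i))%N.

Definition count_eq (r s : nat) : nat := (\sum_(i < s) (token i == r))%N.

Lemma sum_ind_ge_multiperiodic r T :
  (\sum_(1 <= t < T.+1) ind_ge (multiperiodic pi (fun _ => 1%N) t) r)%N =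
  count_ge r T.
Proof.
rewrite big_add1 big_mkord; apply: eq_bigr => i _.
by rewrite /multiperiodic /=; have [-> _ _ _] := tokenP i.
Qed.

Lemma count_ge1 s : count_ge 1 s = s.
Proof.
elim: s => [|s IH]; first by rewrite /count_ge big_ord0.
have [_ tok_gt0 _ _] := tokenP s.
by rewrite /count_ge big_ord_recr /= -/(count_ge 1 s) IH tok_gt0 addn1.
Qed.

Lemma count_geS r s : count_ge r s = (count_ge r.+1 s + count_eq r s)%N.
Proof. by rewrite /count_ge /count_eq -big_split; apply: eq_bigr => i _; case: ltngtP. Qed.

Hypothesis pi_gt0 : forall r, (0 < r)%N -> (0 < pi r)%N.

Lemma clk_invariant r s : (0 < r)%N ->
  (0 < clk s r <= pi r)%N /\ (count_ge r s + clk s r = pi r * count_eq r s + 1)%N.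
Proof.
move=> r_gt0; elim: s => [|s [clk_bnd IH]].
  by rewrite /clk /count_ge /count_eq /= !big_ord0 pi_gt0 ?muln0.
rewrite /count_ge /count_eq !big_ord_recr /= -/(count_ge r s) -/(count_eq r s) clkS //.
have [_ _ clk_tok tokmin] := tokenP s.
case: (ltngtP r (token s)) => [r_lt|r_gt|r_tok].
- by have := tokmin r r_gt0 r_lt; split; lia.
- by split; lia.
- by rewrite -r_tok in clk_tok; rewrite pi_gt0 // leqnn; split=> //; lia.
Qed.

Lemma count_ge_succ r T : (0 < r)%N -> exists2 d, (d < pi r)%N &
  (pi r * count_ge r.+1 T + d = (pi r - 1) * count_ge r T)%N.
Proof.
move=> r_gt0; have [/andP[clk_gt0 clk_le] inv] := clk_invariant T r_gt0.
exists (clk T r).-1; first lia.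
by rewrite count_geS in inv *; nia.
Qed.

Variable R : realType.

Definition freq (r T : nat) : R := (count_ge r T)%:R / T%:R.

Definition pass_rate (r : nat) : R := ((pi r)%:R - 1) / (pi r)%:R.

Lemma freq_succ_bounds r T : (0 < r)%N ->
  pass_rate r * freq r T - T%:R^-1 <= freq r.+1 T <= pass_rate r * freq r T.
Proof.
move=> r_gt0; have [d d_lt E] := count_ge_succ T r_gt0.
have pi_neq0 : (pi r)%:R != 0 :> R by rewrite pnatr_eq0 -lt0n pi_gt0.
have count_succ : (count_ge r.+1 T)%:R
    = ((pi r - 1)%:R * (count_ge r T)%:R - d%:R) / (pi r)%:R :> R.
  by rewrite -natrM -E natrD addrK natrM mulrAC divff // mul1r.
have -> : freq r.+1 T = pass_rate r * freq r T - d%:R / (pi r)%:R * T%:R^-1.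
  by rewrite /freq count_succ /pass_rate natrB ?pi_gt0 //; move: T%:R^-1 => invT; field.
have d_frac0 : 0 <= d%:R / (pi r)%:R :> R by rewrite divr_ge0.
have d_frac1 : d%:R / (pi r)%:R <= 1 :> R.
  by rewrite ler_pdivrMr ?mul1r ?ler_nat ?ltr0n ?pi_gt0 // ltnW.
have invT0 : 0 <= T%:R^-1 :> R by rewrite invr_ge0.
have err_le : d%:R / (pi r)%:R * T%:R^-1 <= T%:R^-1 :> R.
  by rewrite -[leRHS]mul1r ler_wpM2r.
have err_ge0 : 0 <= d%:R / (pi r)%:R * T%:R^-1 :> R by rewrite mulr_ge0.
by apply/andP; split; lra.
Qed.

Lemma cvg_freq r : (0 < r)%N -> freq r @ \oo --> \prod_(1 <= i < r) pass_rate i.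
Proof.
elim: r => [//|r IH] _; have [->|r_gt0] := posnP r.
  rewrite big_geq //; apply: cvg_near_cst; near=> T.
  by rewrite /freq count_ge1 divff // pnatr_eq0 -lt0n; near: T; exists 1%N.
rewrite big_nat_recr //= mulrC.
set a := pass_rate r; set L := (\prod_(_ <= _ < _) _)%R.
have aF : (fun T => a * freq r T) @ \oo --> a * L by exact: cvgMl_tmp (IH r_gt0).
apply: (squeeze_cvgr _ _ aF); first by near=> T; exact: freq_succ_bounds.
by rewrite -[a * L]subr0; exact: (cvgB aF (@cvg_invn R)).
Unshelve. all: end_near.
Qed.

End AllSeedsOne.

Theorem theorem1 (R : realType) (pi : nat -> nat)
  (hpi : forall r, (0 < r)%N -> (0 < pi r)%N) (r : nat) (hr : (0 < r)%N) :
  (fun T : nat =>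
     (\sum_(1 <= t < T.+1) ind_ge (multiperiodic pi (fun _ => 1%N) t) r)%N%:R
       / T%:R : R) @ \oo -->
  \prod_(1 <= i < r) (((pi i)%:R - 1) / (pi i)%:R : R).
Proof.
under eq_fun do rewrite sum_ind_ge_multiperiodic -/(freq pi R r _).
exact: cvg_freq.
Qed.
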